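(* Let $n\ge1$ and $m\ge2$. Every geodesic in $Y_{n,m}$ ending at the all-zero vertex $0$ has a wall.
   Context: The Yoke graph $Y_{n,m}$ has vertices the tuples $v=(v_0,\dots,v_{m+1})$ with $v_0,v_{m+1}\in\mathbb{Z}_n$, $v_1,\dots,v_m\in\{0,1\}$, $\sum v_i\equiv0\pmod n$; $u\sim v$ iff $u=\overleftarrow{s}_i(v)$ or $u=\overrightarrow{s}_i(v)$ for some $0\le i\le m$, where $\overleftarrow{s}_i(v)$ (left shift) replaces $v_i,v_{i+1}$ by $v_i+1,v_{i+1}-1$ and $\overrightarrow{s}_i(v)$ (right shift) by $v_i-1,v_{i+1}+1$ (buckets mod $n$). For a path $P=(v^0\sim\dots\sim v^d=0)$: an integer $0\le p\le m$ is an inner wall of $P$ if no step of $P$ changes entries $p$ and $p+1$; $-1$ is a (left outer) wall if no step satisfies $v^t=\overleftarrow{s}_0(v^{t-1})$; $m+1$ is a (right outer) wall if no step satisfies $v^t=\overrightarrow{s}_m(v^{t-1})$. A wall is an inner or outer wall. *)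

From mathcomp Require Import all_boot all_order all_algebra.
Set Implicit Arguments. Unset Strict Implicit. Unset Printing Implicit Defensive.
Import Order.TTheory GRing.Theory Num.Theory.
Local Open Scope ring_scope.

(* A vertex is a sequence v = [:: v_0; v_1; ...; v_{m+1}]
   of integers of size m+2; the "buckets" v_0 and v_{m+1} are represented by
   their canonical residues in [0, n) (elements of Z_n), the inner entries lie
   in {0,1}, and the total sum is 0 mod n. *)

Definition is_bucket (m j : nat) : bool := (j == 0)%N || (j == m.+1)%N.

Definition ynorm (n m j : nat) (x : int) : int :=
  if is_bucket m j then (x %% n%:Z)%Z else x.

Definition yvertex (n m : nat) (v : seq int) : bool :=
  [&& size v == m.+2,
      all (fun j => if is_bucket m j then (0 <= nth 0 v j) && (nth 0 v j < n%:Z)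
                    else (nth 0 v j == 0) || (nth 0 v j == 1)) (iota 0 m.+2)
    & ((\sum_(x <- v) x) %% n%:Z)%Z == 0].

Definition yzero (m : nat) : seq int := nseq m.+2 0.

Definition yshift (n m i : nat) (a b : int) (v : seq int) : seq int :=
  [seq ynorm n m j (nth 0 v j + (if j == i then a else if j == i.+1 then b else 0))
  | j <- iota 0 m.+2].

Definition ylshift (n m i : nat) (v : seq int) := yshift n m i 1 (-1) v.
Definition yrshift (n m i : nat) (v : seq int) := yshift n m i (-1) 1 v.

Definition yedge (n m : nat) : rel (seq int) := fun v u =>
  [&& yvertex n m v, yvertex n m u &
      has (fun i => (u == ylshift n m i v) || (u == yrshift n m i v)) (iota 0 m.+1)].

(* A path v^0 ~ v^1 ~ ... ~ v^d is given by its start x = v^0 and the list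
   s = [:: v^1; ...; v^d]; it is valid if [path (yedge n m) x s].
   Its steps are the pairs (v^{t-1}, v^t), t = 1..d. *)
Definition ysteps (x : seq int) (s : seq (seq int)) := zip (x :: s) s.

Definition ygeodesic (n m : nat) (x : seq int) (s : seq (seq int)) : Prop :=
  yvertex n m x /\ path (yedge n m) x s /\
  forall s', path (yedge n m) x s' -> last x s' = last x s -> (size s <= size s')%N.

Definition inner_wall (n m : nat) (x : seq int) (s : seq (seq int)) (p : nat) : Prop :=
  (p <= m)%N /\
  all (fun st => (st.2 != ylshift n m p st.1) && (st.2 != yrshift n m p st.1)) (ysteps x s).

(* -1 is a (left outer) wall: no step v^t = s_0^<-(v^{t-1}) *)
Definition left_outer_wall (n m : nat) (x : seq int) (s : seq (seq int)) : Prop :=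
  all (fun st => st.2 != ylshift n m 0 st.1) (ysteps x s).

(* m+1 is a (right outer) wall: no step v^t = s_m^->(v^{t-1}) *)
Definition right_outer_wall (n m : nat) (x : seq int) (s : seq (seq int)) : Prop :=
  all (fun st => st.2 != yrshift n m m st.1) (ysteps x s).

Definition has_wall (n m : nat) (x : seq int) (s : seq (seq int)) : Prop :=
  (exists p, inner_wall n m x s p) \/ left_outer_wall n m x s \/ right_outer_wall n m x s.

(* Record, for a path to 0, the numbers U_p and V_p of left and right shifts at
   each index 0 <= p <= m, and put D_p = U_p - V_p.  A shift at index i changes the
   inner prefix sums P_p(v) = v_1 + ... + v_p by [p = i] - [i = 0] (times its
   direction) and the bucket v_0 by [i = 0], so a path ending at 0 starts at a
   vertex x with P_p(x) = D_0 - D_p and x_0 = -D_0 (mod n).  Conversely, since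
   P_p(x) is nondecreasing in p, a greedy shift at the end of a constant block
   decreases sum_p |c + P_p(x)| by one for any c = x_0 (mod n), which yields a
   path from x to 0 of length sum_p |D_p|.  Hence a geodesic, of length
   sum_p (U_p + V_p), shifts every index in one direction only.  Without a wall
   every D_p would be nonzero, with D_0 > 0 (some left shift at 0) and D_m < 0
   (some right shift at m); but D_(p+1) = D_p - x_(p+1) descends by at most one
   at a time, so it would have to vanish somewhere. *)

From mathcomp Require Import all_boot all_order all_algebra zify.
Set Implicit Arguments. Unset Strict Implicit. Unset Printing Implicit Defensive.
Import GRing.Theory Num.Theory.
Local Open Scope ring_scope.

Lemma sumn_pred1_nat (l h i : nat) :
  (\sum_(l <= k < h) (k == i) = (l <= i < h))%N.
Proof.
by rewrite -big_mkcondr sum1_count count_uniq_mem ?iota_uniq ?mem_index_iota.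
Qed.

Lemma sumr_pred1_nat (V : nmodType) (a : V) (l h i : nat) :
  \sum_(l <= k < h) a *+ (k == i) = a *+ (l <= i < h)%N.
Proof. by rewrite sumrMnr sumn_pred1_nat. Qed.

Lemma modz_sum (d : int) (r : seq nat) (f g : nat -> int) :
  (forall j, f j = g j %[mod d])%Z ->
  (\sum_(j <- r) f j = \sum_(j <- r) g j %[mod d])%Z.
Proof.
move=> eq_fg; elim: r => [|j r IH]; rewrite ?big_nil // !big_cons.
by rewrite -modzDml eq_fg modzDml -modzDmr IH modzDmr.
Qed.

Lemma sum_absz_bump (F : nat -> int) a i h : (i < h)%N ->
  (\sum_(0 <= p < h) `|(F p + a *+ (p == i))%R| + `|F i| =
   \sum_(0 <= p < h) `|F p| + `|(F i + a)%R|)%N.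
Proof.
move=> lt_ih; have i_in : i \in index_iota 0 h by rewrite mem_index_iota.
rewrite !(bigD1_seq i) ?iota_uniq //= eqxx mulr1n.
rewrite (eq_bigr (fun p => `|F p|%N)) => [|p /negbTE->]; last by rewrite addr0.
lia.
Qed.

Lemma sum_add_le_absz_sub (u v : nat -> nat) h :
  (\sum_(0 <= p < h) (u p + v p) <= \sum_(0 <= p < h) `|((u p)%:Z - (v p)%:Z)%R|)%N ->
  forall p, (p < h)%N -> u p = 0%N \/ v p = 0%N.
Proof.
move=> le_sum p lt_ph.
have le_uv (q : 'I_h) : true ->
    (`|((u q)%:Z - (v q)%:Z)%R| <= u q + v q ?= iff (u q == 0%N) || (v q == 0%N))%N.
  by move=> _; split; [lia | apply/eqP/orP => [|[] /eqP]; lia].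
move: le_sum; rewrite !big_mkord (geq_leqif (leqif_sum le_uv)).
by move=> /forallP/(_ (Ordinal lt_ph)) /=; case/orP => /eqP; [left | right].
Qed.

Lemma nondecr_first_max (F : nat -> int) k : (forall p, F p <= F p.+1) ->
  exists2 i, (i <= k)%N &
    [/\ F i = F k, (0 < i)%N -> F i.-1 < F i & (i < k)%N -> F i.+1 = F i].
Proof.
move=> F_nondecr; elim: k => [|k [i le_ik [Fik Fi_lt Fi_eq]]]; first by exists 0%N.
have := F_nondecr k; have [Fk_eq _ | Fk_neq Fk_le] := eqVneq (F k) (F k.+1).
  exists i; first exact: leqW.
  split=> // [|lt_ik]; first by rewrite Fik.
  by have [/Fi_eq // | ge_ik] := ltnP i k; have -> : i = k by lia.
by exists k.+1 => //; split; rewrite ?ltnn //= => _; lia.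
Qed.

Lemma nondecr_last_min (F : nat -> int) k : (forall p, F p <= F p.+1) ->
  exists2 i, (i <= k)%N &
    [/\ F i = F 0, (0 < i)%N -> F i.-1 = F i & (i < k)%N -> F i < F i.+1].
Proof.
move=> F_nondecr; elim: k => [|k [i le_ik [Fi0 Fi_eq Fi_lt]]]; first by exists 0%N.
have [lt_ik | ge_ik] := ltnP i k.
  by exists i; [exact: leqW | split=> // _; exact: Fi_lt].
have eq_ik : i = k by lia.
subst i.
have := F_nondecr k; have [Fk_eq _ | Fk_neq Fk_le] := eqVneq (F k) (F k.+1).
  by exists k.+1 => //; split; rewrite ?ltnn //= -Fk_eq.
by exists k => //; split=> // _; lia.
Qed.

Lemma unit_decr_gt0 (f : nat -> int) k :
  (forall p, (p < k)%N -> f p.+1 = f p \/ f p.+1 = f p - 1) ->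
  0 < f 0%N -> (forall p, (p <= k)%N -> f p != 0) -> 0 < f k.
Proof.
elim: k => // k IH step f0_gt0 f_neq0.
have fk_gt0 : 0 < f k.
  apply: IH => // [p lt_pk | p le_pk]; first exact: step (ltnW lt_pk).
  exact: f_neq0 (leqW le_pk).
by have := step k (ltnSn k); have := f_neq0 k.+1 (leqnn _); lia.
Qed.

Lemma all_predC_of_count0 (T : Type) (a : pred T) s :
  count a s = 0%N -> all (predC a) s.
Proof. by move=> a0; rewrite all_count -(count_predC a) a0. Qed.

Definition psum (v : seq int) (p : nat) : int := \sum_(1 <= k < p.+1) nth 0 v k.

Lemma psum0 v : psum v 0 = 0.
Proof. by rewrite /psum big_geq. Qed.

Lemma psumS v p : psum v p.+1 = psum v p + nth 0 v p.+1.
Proof. by rewrite /psum big_nat_recr. Qed.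

Lemma psum_yzero m p : psum (yzero m) p = 0.
Proof. by rewrite /psum big1 // => k _; rewrite nth_nseq if_same. Qed.

Section Yoke.
Variables n m : nat.

Lemma yvertex_size x : yvertex n m x -> size x = m.+2.
Proof. by case/and3P => /eqP. Qed.

Lemma yvertex_inner x j : yvertex n m x -> (0 < j <= m)%N ->
  nth 0 x j = 0 \/ nth 0 x j = 1.
Proof.
case/and3P => _ /allP xE _ lt_j; have /xE : j \in iota 0 m.+2 by rewrite mem_iota; lia.
have -> : is_bucket m j = false by rewrite /is_bucket; lia.
by case/orP => /eqP; [left | right].
Qed.

Lemma yvertex_bucket x j : yvertex n m x -> is_bucket m j ->
  0 <= nth 0 x j < n%:Z.
Proof.
case/and3P => _ /allP xE _ bj; have /xE : j \in iota 0 m.+2.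
  by rewrite mem_iota; move: bj; rewrite /is_bucket; lia.
by rewrite bj.
Qed.

Lemma yvertex_sum x : yvertex n m x -> ((\sum_(y <- x) y) %% n%:Z = 0)%Z.
Proof. by case/and3P => _ _ /eqP. Qed.

Lemma ynorm_inner j y : (0 < j <= m)%N -> ynorm n m j y = y.
Proof. by move=> lt_j; rewrite /ynorm /is_bucket ifF //; lia. Qed.

Lemma nth_yshift i a v j : (j < m.+2)%N ->
  nth 0 (yshift n m i a (- a) v) j =
  ynorm n m j (nth 0 v j + (a *+ (j == i) - a *+ (j == i.+1))).
Proof.
move=> lt_j; rewrite /yshift (nth_map 0%N) ?size_iota // nth_iota // add0n.
rewrite !mulrb; case: eqP => [->|_]; first by rewrite (ltn_eqF (ltnSn i)) subr0.
by case: eqP; rewrite ?sub0r.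
Qed.

Lemma ynorm_mod j y : (ynorm n m j y = y %[mod n])%Z.
Proof. by rewrite /ynorm; case: ifP; rewrite ?modz_mod. Qed.

Lemma yrshiftE i v : yrshift n m i v = yshift n m i (-1) (- -1) v.
Proof. by rewrite opprK. Qed.

Lemma psum_yshift i a v p : (i <= m)%N -> (p <= m)%N ->
  psum (yshift n m i a (- a) v) p = psum v p + a *+ (p == i) - a *+ (i == 0%N).
Proof.
move=> le_i le_p; rewrite /psum.
pose g k := nth 0 v k + (a *+ (k == i) - a *+ (k == i.+1)).
rewrite (eq_big_nat _ _ (F2 := g)).
  rewrite big_split sumrB /= !sumr_pred1_nat !mulrb -addrA; congr (_ + _).
  by repeat case: ifP; lia.
by move=> k lt_k; rewrite nth_yshift ?ynorm_inner //; lia.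
Qed.

Lemma nth0_yshift i a v :
  (nth 0 (yshift n m i a (- a) v) 0 = nth 0 v 0 + a *+ (i == 0%N) %[mod n])%Z.
Proof. by rewrite nth_yshift // modz_mod subr0 eq_sym. Qed.

(* For m = 1 and n = 1 the shifts s_0^<- and s_1^-> coincide. *)
Hypothesis m_ge2 : (2 <= m)%N.

Lemma yshift_inj i j a b v : (i <= m)%N -> (j <= m)%N ->
  a = 1 \/ a = -1 -> b = 1 \/ b = -1 ->
  yshift n m i a (- a) v = yshift n m j b (- b) v -> i = j /\ a = b.
Proof.
move=> le_i le_j a1 b1 eq_ij.
have psumE p : (p <= m)%N ->
    a *+ (p == i) - a *+ (i == 0%N) = b *+ (p == j) - b *+ (j == 0%N).
  by move=> le_p; apply: (@addrI _ (psum v p)); rewrite !addrA -!psum_yshift // eq_ij.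
move: (psumE i le_i) (psumE j le_j) (psumE 1%N (ltnW m_ge2)) (psumE 2%N m_ge2).
by rewrite !mulrb; repeat case: ifP; lia.
Qed.

Definition lstep p (st : seq int * seq int) : bool := st.2 == ylshift n m p st.1.
Definition rstep p (st : seq int * seq int) : bool := st.2 == yrshift n m p st.1.
Definition sstep p st : int := (lstep p st : nat)%:Z - (rstep p st : nat)%:Z.

Lemma lstep_yshift i a v p : (i <= m)%N -> (p <= m)%N -> a = 1 \/ a = -1 ->
  lstep p (v, yshift n m i a (- a) v) = (p == i) && (a == 1).
Proof.
move=> le_i le_p a1; apply/eqP/andP => [eq_ip | [/eqP-> /eqP->]] //.
by have [-> ->] := yshift_inj le_i le_p a1 (or_introl erefl) eq_ip.
Qed.

Lemma rstep_yshift i a v p : (i <= m)%N -> (p <= m)%N -> a = 1 \/ a = -1 ->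
  rstep p (v, yshift n m i a (- a) v) = (p == i) && (a == -1).
Proof.
move=> le_i le_p a1; rewrite /rstep yrshiftE.
apply/eqP/andP => [eq_ip | [/eqP-> /eqP->]] //.
by have [-> ->] := yshift_inj le_i le_p a1 (or_intror erefl) eq_ip.
Qed.

Lemma sstep_yshift i a v p : (i <= m)%N -> (p <= m)%N -> a = 1 \/ a = -1 ->
  sstep p (v, yshift n m i a (- a) v) = a *+ (p == i).
Proof.
move=> le_i le_p a1; rewrite /sstep lstep_yshift ?rstep_yshift //.
by rewrite mulrb; case: ifP; lia.
Qed.

Lemma yedge_shift v w : yedge n m v w ->
  exists i a, [/\ (i <= m)%N, a = 1 \/ a = -1 & w = yshift n m i a (- a) v].
Proof.
case/and3P => _ _ /hasP[i]; rewrite mem_iota => lt_i /orP[] /eqP->.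
  by exists i, 1; split => //; left.
by exists i, (-1); rewrite -yrshiftE; split => //; right.
Qed.

Lemma yedge_psum v w p : yedge n m v w -> (p <= m)%N ->
  psum w p = psum v p + sstep p (v, w) - sstep 0 (v, w).
Proof.
case/yedge_shift => i [a [le_i a1 ->]] le_p.
by rewrite psum_yshift // !sstep_yshift // (eq_sym 0%N).
Qed.

Lemma yedge_bucket v w : yedge n m v w ->
  (nth 0 w 0 = nth 0 v 0 + sstep 0 (v, w) %[mod n])%Z.
Proof.
case/yedge_shift => i [a [le_i a1 ->]].
by rewrite nth0_yshift sstep_yshift // (eq_sym 0%N).
Qed.

Lemma yedge_nsteps v w :
  yedge n m v w -> (\sum_(0 <= p < m.+1) (lstep p (v, w) + rstep p (v, w)) = 1)%N.
Proof.
case/yedge_shift => i [a [le_i a1 ->]].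
rewrite (eq_big_nat _ _ (F2 := fun p => (p == i : nat))) ?sumn_pred1_nat; first lia.
by move=> p lt_p; rewrite lstep_yshift ?rstep_yshift //; case: (p == i); lia.
Qed.

Definition net p (l : seq (seq int * seq int)) : int :=
  (count (lstep p) l : nat)%:Z - (count (rstep p) l : nat)%:Z.

Lemma ysteps_cons x w s : ysteps x (w :: s) = (x, w) :: ysteps w s.
Proof. by []. Qed.

Lemma net_cons p st l : net p (st :: l) = sstep p st + net p l.
Proof. by rewrite /net /sstep /=; lia. Qed.

Lemma path_psum x s p : path (yedge n m) x s -> (p <= m)%N ->
  psum (last x s) p = psum x p + net p (ysteps x s) - net 0 (ysteps x s).
Proof.
move=> + le_p; elim: s x => [|w s IH] x; first by rewrite /net /= !subrr subr0 addr0.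
case/andP => xw /IH ->; rewrite (yedge_psum xw le_p) ysteps_cons !net_cons; lia.
Qed.

Lemma path_bucket x s : path (yedge n m) x s ->
  (nth 0 (last x s) 0 = nth 0 x 0 + net 0 (ysteps x s) %[mod n])%Z.
Proof.
elim: s x => [|w s IH] x; first by rewrite /net /= subrr addr0.
case/andP => xw /IH ->; rewrite ysteps_cons net_cons (addrA (nth 0 x 0)).
by rewrite -modzDml (yedge_bucket xw) modzDml.
Qed.

Lemma path_nsteps x s : path (yedge n m) x s ->
  (\sum_(0 <= p < m.+1) (count (lstep p) (ysteps x s) + count (rstep p) (ysteps x s))
   = size s)%N.
Proof.
elim: s x => [|w s IH] x; first by rewrite big1.
case/andP => xw /IH nsteps_s; change (size (w :: s)) with (1 + size s)%N.
rewrite ysteps_cons -(yedge_nsteps xw) -nsteps_s -big_split /=.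
by apply: eq_bigr => p _; rewrite addnACA.
Qed.

Hypothesis n_gt0 : (0 < n)%N.

Lemma yvertex_ge0 x j : yvertex n m x -> 0 <= nth 0 x j.
Proof.
move=> xv; have [lt_j | ge_j] := ltnP j m.+2; last first.
  by rewrite nth_default ?(yvertex_size xv).
case: (boolP (is_bucket m j)) => [bj | not_bj].
  by case/andP: (yvertex_bucket xv bj).
have inner_j : (0 < j <= m)%N by move: not_bj; rewrite /is_bucket; lia.
by have [->|->] := yvertex_inner xv inner_j.
Qed.

Lemma sum_psum x : size x = m.+2 ->
  \sum_(y <- x) y = nth 0 x 0 + psum x m + nth 0 x m.+1.
Proof.
by move=> size_x; rewrite (big_nth 0) size_x big_ltn // big_nat_recr //= addrA.
Qed.

Lemma yvertex_yshift x i a : yvertex n m x -> (i <= m)%N ->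
  ((0 < i)%N -> 0 <= nth 0 x i + a <= 1) ->
  ((i < m)%N -> 0 <= nth 0 x i.+1 - a <= 1) ->
  yvertex n m (yshift n m i a (- a) x).
Proof.
move=> xv le_i ok_i ok_i1; apply/and3P; split.
- by rewrite size_map size_iota.
- apply/allP => j; rewrite mem_iota add0n => lt_j; rewrite nth_yshift //.
  case: ifP => [bj | not_bj]; first by rewrite /ynorm bj modz_ge0 ?ltz_pmod //; lia.
  have inner_j : (0 < j <= m)%N by move: not_bj; rewrite /is_bucket; lia.
  rewrite ynorm_inner // !mulrb; have := yvertex_inner xv inner_j.
  case: (j =P i) => [ji | _].
    by subst j; rewrite (ltn_eqF (ltnSn i)); have := ok_i ltac:(lia); lia.
  case: (j =P i.+1) => [ji1 | _]; first by subst j; have := ok_i1 ltac:(lia); lia.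
  lia.
- apply/eqP; rewrite (big_nth 0) size_map size_iota.
  pose g j := nth 0 x j + (a *+ (j == i) - a *+ (j == i.+1)).
  rewrite (eq_big_nat _ _ (F2 := fun j => ynorm n m j (g j))); last first.
    by move=> j lt_j; rewrite nth_yshift.
  rewrite (@modz_sum _ _ _ g); last by move=> j; exact: ynorm_mod.
  rewrite big_split sumrB /= !sumr_pred1_nat.
  have -> : (0 <= i < m.+2)%N by lia.
  have -> : (0 <= i.+1 < m.+2)%N by lia.
  rewrite subrr addr0.
  by have := yvertex_sum xv; rewrite (big_nth 0) (yvertex_size xv).
Qed.

Definition potential x (c : int) : nat :=
  (\sum_(0 <= p < m.+1) `|(c + psum x p)%R|)%N.

Lemma potential_eq0 x c :
  potential x c = 0%N <-> forall p, (p <= m)%N -> c + psum x p = 0.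
Proof.
rewrite /potential; split => [/eqP | F0].
  rewrite sum_nat_seq_eq0 => /allP F0 p le_p.
  by move: (F0 p); rewrite mem_index_iota; lia.
apply/eqP; rewrite sum_nat_seq_eq0; apply/allP => p.
by rewrite mem_index_iota => lt_p; rewrite F0.
Qed.

Lemma yzero_of_potential0 x c : yvertex n m x -> (nth 0 x 0 = c %[mod n])%Z ->
  potential x c = 0%N -> x = yzero m.
Proof.
move=> xv x0c /potential_eq0 F0.
have c0 : c = 0 by have := F0 0%N isT; rewrite psum0 addr0.
have psum_m : psum x m = 0 by have := F0 m (leqnn m); rewrite c0 add0r.
have x0 : nth 0 x 0 = 0.
  by move: x0c; rewrite c0 mod0z modz_small // yvertex_bucket.
have x_inner j : (0 < j <= m)%N -> nth 0 x j = 0.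
  by case: j => // j le_j; have := F0 j _; have := F0 j.+1 le_j; rewrite psumS; lia.
have x_last : nth 0 x m.+1 = 0.
  have bucket_x : 0 <= nth 0 x m.+1 < n%:Z.
    by apply: (yvertex_bucket xv); rewrite /is_bucket eqxx orbT.
  have := yvertex_sum xv; rewrite sum_psum ?(yvertex_size xv) // x0 psum_m.
  by rewrite !add0r modz_small.
apply: (eq_from_nth (x0 := 0)); first by rewrite (yvertex_size xv) size_nseq.
move=> j; rewrite (yvertex_size xv) => lt_j; rewrite nth_nseq lt_j.
case: j lt_j => [|j] lt_j //; have [lt_jm | ge_jm] := ltnP j m; first exact: x_inner.
by have -> : j = m by lia.
Qed.

Lemma potential_move x c : yvertex n m x -> (0 < potential x c)%N ->
  exists i a, [/\ (i <= m)%N, a = 1 \/ a = -1,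
    (0 < i)%N -> 0 <= nth 0 x i + a <= 1,
    (i < m)%N -> 0 <= nth 0 x i.+1 - a <= 1 &
    (`|(c + psum x i + a)%R|.+1 = `|(c + psum x i)%R|)%N].
Proof.
move=> xv pot_gt0; pose F p := c + psum x p.
have FS p : F p.+1 = F p + nth 0 x p.+1 by rewrite /F psumS addrA.
have F_nondecr p : F p <= F p.+1 by rewrite FS lerDl yvertex_ge0.
have F_pred i : (0 < i)%N -> F i = F i.-1 + nth 0 x i by case: i.
have x01 j : (0 < j <= m)%N -> nth 0 x j = 0 \/ nth 0 x j = 1 := yvertex_inner xv.
have [Fm_gt0 | Fm_le0] := ltrP 0 (F m).
  have [i le_im [Fim Fi_lt Fi_eq]] := nondecr_first_max m F_nondecr.
  exists i, (-1); split=> //; [by right | move=> i_gt0 | move=> lt_im | ].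
  - by have := F_pred i i_gt0; have := Fi_lt i_gt0; have := x01 i ltac:(lia); lia.
  - by have := FS i; have := Fi_eq lt_im; have := x01 i.+1 ltac:(lia); lia.
  - by move: Fm_gt0; rewrite -Fim /F; lia.
have [F0_lt0 | F0_ge0] := ltrP (F 0%N) 0.
  have [i le_im [Fi0 Fi_eq Fi_lt]] := nondecr_last_min m F_nondecr.
  exists i, 1; split=> //; [by left | move=> i_gt0 | move=> lt_im | ].
  - by have := F_pred i i_gt0; have := Fi_eq i_gt0; have := x01 i ltac:(lia); lia.
  - by have := FS i; have := Fi_lt lt_im; have := x01 i.+1 ltac:(lia); lia.
  - by move: F0_lt0; rewrite -Fi0 /F; lia.
suff /potential_eq0 : forall p, (p <= m)%N -> F p = 0 by lia.
move=> p le_p; have /Order.NatMonotonyTheory.nondecnP F_homo := F_nondecr.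
by have := F_homo _ _ le_p; have := F_homo _ _ (leq0n p); lia.
Qed.

Lemma yedge_yshift x i a : yvertex n m x -> (i <= m)%N -> a = 1 \/ a = -1 ->
  ((0 < i)%N -> 0 <= nth 0 x i + a <= 1) ->
  ((i < m)%N -> 0 <= nth 0 x i.+1 - a <= 1) ->
  yedge n m x (yshift n m i a (- a) x).
Proof.
move=> xv le_i a1 ok_i ok_i1; apply/and3P; split=> //; first exact: yvertex_yshift.
apply/hasP; exists i; first by rewrite mem_iota.
by case: a1 => ->; rewrite ?yrshiftE eqxx ?orbT.
Qed.

Lemma potential_yshift x c i a : (i <= m)%N ->
  (potential (yshift n m i a (- a) x) (c + a *+ (i == 0%N)) + `|(c + psum x i)%R| =
   potential x c + `|(c + psum x i + a)%R|)%N.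
Proof.
move=> le_i; rewrite /potential -(sum_absz_bump (fun p => c + psum x p)) //.
congr (_ + _)%N; apply: eq_big_nat => p lt_p.
by rewrite psum_yshift //; lia.
Qed.

Lemma path_to_yzero x c : yvertex n m x -> (nth 0 x 0 = c %[mod n])%Z ->
  exists s, [/\ path (yedge n m) x s, last x s = yzero m & size s = potential x c].
Proof.
move Npot : (potential x c) => N; elim: N x c Npot => [|N IH] x c Npot xv x0c.
  by exists [::]; rewrite (yzero_of_potential0 xv x0c Npot).
have [|i [a [le_i a1 ok_i ok_i1 decr]]] := potential_move (c := c) xv.
  by rewrite Npot.
have xy := yedge_yshift xv le_i a1 ok_i ok_i1.
have [|||s [ys last_s size_s]] := IH (yshift n m i a (- a) x) (c + a *+ (i == 0%N)).
- have := potential_yshift x c a le_i; rewrite Npot -decr addnS addSn.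
  by move=> /eqP; rewrite eqSS eqn_add2r => /eqP.
- by case/and3P: xy.
- by rewrite nth0_yshift -modzDml x0c modzDml.
by exists (yshift n m i a (- a) x :: s); rewrite /= xy ys last_s size_s.
Qed.

Lemma geodesic_psum x s : path (yedge n m) x s -> last x s = yzero m ->
  forall p, (p <= m)%N -> psum x p = net 0 (ysteps x s) - net p (ysteps x s).
Proof.
by move=> xs last0 p le_p; have := path_psum xs le_p; rewrite last0 psum_yzero; lia.
Qed.

Lemma geodesic_one_direction x s : ygeodesic n m x s -> last x s = yzero m ->
  forall p, (p <= m)%N ->
  count (lstep p) (ysteps x s) = 0%N \/ count (rstep p) (ysteps x s) = 0%N.
Proof.
move=> [xv [xs s_min]] last0; have psumE := geodesic_psum xs last0.
have nstepsE := path_nsteps xs; have bucketE := path_bucket xs.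
set l := ysteps x s in psumE nstepsE bucketE *.
have x0E : (nth 0 x 0 = - net 0 l %[mod n])%Z.
  move: bucketE; rewrite last0 nth_nseq /= => /esym/eqP.
  by rewrite -(eqz_modDr (- net 0 l)) addrK add0r => /eqP.
have [s' [xs' last' size']] := path_to_yzero xv x0E.
have potE : potential x (- net 0 l) = (\sum_(0 <= p < m.+1) `|net p l|)%N.
  by apply: eq_big_nat => p lt_p; rewrite psumE //; lia.
move=> p le_p; apply: (@sum_add_le_absz_sub (fun p => count (lstep p) l)
  (fun p => count (rstep p) l) m.+1 _ p le_p).
by rewrite nstepsE -potE -size'; apply: s_min; rewrite // last' last0.
Qed.

Lemma geodesic_unused_shift x s : ygeodesic n m x s -> last x s = yzero m ->
  (exists2 p, (p <= m)%N &
     count (lstep p) (ysteps x s) = 0%N /\ count (rstep p) (ysteps x s) = 0%N) \/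
  count (lstep 0) (ysteps x s) = 0%N \/ count (rstep m) (ysteps x s) = 0%N.
Proof.
move=> geo last0; have [xv [xs _]] := geo.
have one_dir := geodesic_one_direction geo last0.
have psumE := geodesic_psum xs last0; set l := ysteps x s in one_dir psumE *.
have [/hasP[p] | /hasPn used] :=
  boolP (has (fun p => count (lstep p) l + count (rstep p) l == 0)%N (iota 0 m.+1)).
  by rewrite mem_iota => lt_p /eqP nsteps0; left; exists p; lia.
have [|l0_gt0] := posnP (count (lstep 0) l); first by right; left.
have [|rm_gt0] := posnP (count (rstep m) l); first by right; right.
have net_neq0 p : (p <= m)%N -> net p l != 0.
  move=> le_p; have := used p; rewrite mem_iota => /(_ ltac:(lia)).
  by have := one_dir p le_p; rewrite /net; lia.
have net_step p : (p < m)%N -> net p.+1 l = net p l \/ net p.+1 l = net p l - 1.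
  move=> lt_pm; have := psumE _ (ltnW lt_pm); have := psumE _ lt_pm.
  by rewrite psumS; have := yvertex_inner xv (j := p.+1) ltac:(lia); lia.
have := unit_decr_gt0 net_step _ net_neq0.
by have := one_dir 0%N isT; have := one_dir m (leqnn m); rewrite /net; lia.
Qed.

End Yoke.

Theorem lemma4p7 (n m : nat) (hn : (1 <= n)%N) (hm : (2 <= m)%N)
  (x : seq int) (s : seq (seq int)) :
  ygeodesic n m x s -> last x s = yzero m -> has_wall n m x s.
Proof.
move=> geo last0.
have [[p le_p [l0 r0]] | [l0 | r0]] := geodesic_unused_shift hm hn geo last0.
- left; exists p; split=> //; apply/allP => st st_l; apply/andP; split.
    exact: (allP (all_predC_of_count0 l0)).
  exact: (allP (all_predC_of_count0 r0)).
- by right; left; exact: all_predC_of_count0 l0.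
- by right; right; exact: all_predC_of_count0 r0.
Qed.
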